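(* Let $\epsilon\in(0,1)$, $\alpha\ge1$, and let $W$ be a mass vector satisfying $(1-\epsilon)H(\theta,\lambda)\le\tilde H(\theta,\lambda)\le(1+\epsilon)H(\theta,\lambda)$ for all $\theta\in\Theta$ and $\lambda\in[\kappa(\theta),\tau(\theta)]$, with $\tilde{\mathbb P}_n=\sum_iw_i\delta_{\xi_i}$. If $\theta_0\in\Theta$ satisfies $R^{\tilde{\mathbb P}_n}_{\sigma,p}(\theta_0)\le\alpha\inf_{\theta\in\Theta}R^{\tilde{\mathbb P}_n}_{\sigma,p}(\theta)$, then $$R^{\mathbb P_n}_{\sigma,p}(\theta_0)\le\alpha\cdot\frac{1+\epsilon}{1-\epsilon}\inf_{\theta\in\Theta}R^{\mathbb P_n}_{\sigma,p}(\theta).$$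
   Context: Setting: $\Xi=\mathbb X\times\mathbb Y$ with $\mathbb X\subseteq\mathbb R^m$, $\mathbb Y\subseteq\mathbb R$, metric $\mathtt d((x,y),(x',y'))=\|x-x'\|+\frac{\gamma}{2}|y-y'|$ ($\|\cdot\|$ a norm on $\mathbb R^m$, $\gamma>0$), $(\Xi,\mathtt d)$ complete. Fix $p\ge1$, $\sigma>0$, data $\xi_1,\dots,\xi_n\in\Xi$ with empirical distribution $\mathbb P_n=\frac1n\sum_i\delta_{\xi_i}$. Loss $\ell:\mathbb R^d\times\Xi\to[0,\infty)$, feasible set $\Theta\subseteq\mathbb R^d$. Assumption: $\ell(\theta,\cdot)$ continuous for each $\theta\in\Theta$, and there are a positive continuous $\mathtt C(\theta)$ and $\xi_0\in\Xi$ with $\ell(\theta,\xi)\le\mathtt C(\theta)(1+\mathtt d^p(\xi,\xi_0))$. The $p$-Wasserstein distance is $W_p(\mathbb P,\mathbb P')=(\inf_{\pi\in\Pi(\mathbb P,\mathbb P')}\int\mathtt d^p(\xi,\xi')\,\pi(d\xi,d\xi'))^{1/p}$; $\mathbb B_{\sigma,p}(\mathbb Q)$ is the set of Borel probability measures on $\Xi$ at $W_p$-distance at most $\sigma$ from $\mathbb Q$; the worst-case risk is $R^{\mathbb Q}_{\sigma,p}(\theta)=\sup_{\mathbb Q'\in\mathbb B_{\sigma,p}(\mathbb Q)}\mathbb E^{\mathbb Q'}[\ell(\theta,\xi)]$. Define $h(\theta,\lambda,\xi)=\sup_{\zeta\in\Xi}\{\ell(\theta,\zeta)-\lambda\mathtt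 d^p(\zeta,\xi)\}$, $h_i(\theta,\lambda)=h(\theta,\lambda,\xi_i)$, $H(\theta,\lambda)=\frac1n\sum_ih_i(\theta,\lambda)$, and for a mass vector $W=[w_1,\dots,w_n]$ ($w_i\ge0,\sum w_i=1$), $\tilde H(\theta,\lambda)=\sum_iw_ih_i(\theta,\lambda)$. Known strong duality (standing fact): for any $\mathbb Q$ with finite $p$-th moment, $R^{\mathbb Q}_{\sigma,p}(\theta)=\inf_{\lambda\ge0}\{\lambda\sigma^p+\mathbb E^{\mathbb Q}[h(\theta,\lambda,\xi)]\}$. Define $\kappa(\theta)=\limsup_{\mathtt d(\xi,\xi_0)\to\infty}\frac{\ell(\theta,\xi)-\ell(\theta,\xi_0)}{\mathtt d^p(\xi,\xi_0)}$; assume $h_i(\theta,\kappa(\theta))<\infty$. Let $\rho=\max_i\mathtt d(\xi_i,\xi_0)$ and $\tau(\theta)=\mathtt C(\theta)(2^{p-1}+\frac{1+2^{p-1}\rho^p}{\sigma^p})$. *)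

From HB Require Import structures.
From mathcomp Require Import all_boot all_order all_algebra.
From mathcomp Require Import all_classical all_reals all_analysis.
Set Implicit Arguments. Unset Strict Implicit. Unset Printing Implicit Defensive.
Import Order.TTheory GRing.Theory Num.Theory.
Import numFieldNormedType.Exports.
Local Open Scope classical_set_scope.
Local Open Scope ring_scope.

(* ambient space R^m x R ; Xi = X `*` Y is a subset of it *)
Definition Pt (R : realType) (m : nat) := ('rV[R]_m * R)%type.

Definition is_norm (R : realType) (m : nat) (nrm : 'rV[R]_m -> R) : Prop :=
  [/\ forall x, nrm x = 0 -> x = 0,
      forall (a : R) x, nrm (a *: x) = `|a| * nrm x &
      forall x y, nrm (x + y) <= nrm x + nrm y].

Section S.
Variables (R : realType) (m : nat) (nrm : 'rV[R]_m -> R) (gamma : R).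

Definition dist (x y : Pt R m) : R := nrm (x.1 - y.1) + gamma / 2 * `|x.2 - y.2|.

Definition dopen (A : set (Pt R m)) : Prop :=
  forall x, A x -> exists2 r : R, 0 < r & forall y, dist y x < r -> A y.

Definition XiM : Type := g_sigma_algebraType dopen.

Definition complete_on (Xi : set (Pt R m)) : Prop :=
  forall u : nat -> Pt R m, (forall k, Xi (u k)) ->
    (forall e : R, 0 < e -> exists N, forall k l, (N <= k)%N -> (N <= l)%N ->
        dist (u k) (u l) < e) ->
    exists2 x, Xi x & forall e : R, 0 < e -> exists N, forall k, (N <= k)%N ->
        dist (u k) x < e.

Variable (p : R).

Definition coupling (P Q : set XiM -> \bar R)
    (pi : probability (XiM * XiM)%type R) : Prop :=
  forall A : set XiM, measurable A ->
    pi (fst @^-1` A) = P A /\ pi (snd @^-1` A) = Q A.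

Definition Wpp (P Q : set XiM -> \bar R) : \bar R :=
  ereal_inf [set (\int[pi]_z ((dist z.1 z.2) `^ p)%:E)%E | pi in coupling P Q].

Definition Wp (P Q : set XiM -> \bar R) : \bar R := ((Wpp P Q) `^ p^-1)%E.

Variables (Xi : set (Pt R m)) (sigma : R).

Definition wball (Q : set XiM -> \bar R) (Q' : probability XiM R) : Prop :=
  Q' Xi = 1%E /\ (Wp Q Q' <= sigma%:E)%E.

Variables (dd : nat) (loss : 'rV[R]_dd -> Pt R m -> R).

Definition wc_risk (Q : set XiM -> \bar R) (theta : 'rV[R]_dd) : \bar R :=
  ereal_sup [set (\int[Q']_(x in Xi) (loss theta x)%:E)%E | Q' in wball Q].

Definition hfun (theta : 'rV[R]_dd) (lam : R) (xi : Pt R m) : \bar R :=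
  ereal_sup [set (loss theta zeta - lam * (dist zeta xi) `^ p)%:E | zeta in Xi].

(* kappa(theta) = limsup_{d(xi,xi0) -> oo, xi in Xi} (l(xi)-l(xi0))/d^p(xi,xi0) *)
Definition kappa (xi0 : Pt R m) (theta : 'rV[R]_dd) : \bar R :=
  ereal_inf [set ereal_sup
     [set ((loss theta xi - loss theta xi0) / (dist xi xi0) `^ p)%:E
        | xi in Xi `&` [set xi | r < dist xi xi0]]
   | r in [set r : R | 0 < r]].

Variables (n : nat) (xs : 'I_n -> Pt R m).

Definition wmeasure (w : 'I_n -> R) (A : set XiM) : \bar R :=
  (\sum_(i < n) (w i)%:E * @dirac _ XiM (xs i : XiM) R A)%E.

Definition empirical : set XiM -> \bar R := wmeasure (fun _ => n%:R^-1).

Definition Hfun (theta : 'rV[R]_dd) (lam : R) : \bar R :=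
  (\sum_(i < n) (n%:R^-1)%:E * hfun theta lam (xs i))%E.
Definition Htilde (w : 'I_n -> R) (theta : 'rV[R]_dd) (lam : R) : \bar R :=
  (\sum_(i < n) (w i)%:E * hfun theta lam (xs i))%E.

Definition rho (xi0 : Pt R m) : R := \big[Num.max/0]_(i < n) dist (xs i) xi0.

Definition tau (C : 'rV[R]_dd -> R) (xi0 : Pt R m) (theta : 'rV[R]_dd) : R :=
  C theta * (2 `^ (p - 1) + (1 + 2 `^ (p - 1) * (rho xi0) `^ p) / sigma `^ p).

End S.

Arguments coupling {R m} nrm gamma P Q pi.
Arguments Wpp {R m} nrm gamma p P Q.
Arguments Wp {R m} nrm gamma p P Q.
Arguments wball {R m} nrm gamma p Xi sigma Q Q'.
Arguments wc_risk {R m} nrm gamma p Xi sigma {dd} loss Q theta.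
Arguments wmeasure {R m} nrm gamma {n} xs w A.
Arguments empirical {R m} nrm gamma {n} xs A.

(* By strong duality each worst-case risk is the infimum over lam >= 0 of
   lam sigma^p + sum_i v_i h_i(theta, lam), and this infimum may be restricted to
   kappa(theta) <= lam <= tau(theta): below kappa(theta) every h_i is +oo, while beyond
   tau(theta) the objective exceeds its value at lam = C(theta) 2^(p-1), which the growth
   bound on the loss caps by tau(theta) sigma^p.  On that interval the coreset hypothesis
   compares the two dual objectives, whence (1 - eps) R^{P_n} <= R^{P~_n} <= (1 + eps) R^{P_n}
   for every theta; chaining these with the alpha-optimality of theta0 gives the claim. *)

From HB Require Import structures.
From mathcomp Require Import all_boot all_order all_algebra.
From mathcomp Require Import all_classical all_reals all_analysis.
From mathcomp Require Import lra.
Import Order.TTheory GRing.Theory Num.Theory.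
Import numFieldNormedType.Exports.
Local Open Scope classical_set_scope.
Local Open Scope ring_scope.

Set Implicit Arguments.
Unset Strict Implicit.
Unset Printing Implicit Defensive.

Lemma le_scaled_ereal_inf (R : realType) (T : Type) (A : set T)
    (F G : T -> \bar R) (c e : R) : 0 <= c -> 0 < e ->
  (forall x, A x -> exists2 y, A y & (c%:E * G y <= e%:E * F x)%E) ->
  (c%:E * ereal_inf (G @` A) <= e%:E * ereal_inf (F @` A))%E.
Proof.
move=> c0 e0 GF; rewrite -lee_pdivrMl //; apply: le_ereal_inf_tmp => _ [x Ax <-].
have [y Ay GyFx] := GF x Ax; rewrite lee_pdivrMl //; apply: le_trans GyFx.
by apply: lee_wpmul2l; [rewrite lee_fin | apply: ereal_inf_lbound; exists y].
Qed.

Lemma powRD_le (R : realType) (a b p : R) : 0 <= a -> 0 <= b -> 1 <= p ->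
  (a + b) `^ p <= 2 `^ (p - 1) * (a `^ p + b `^ p).
Proof.
move=> a0 b0 p1.
have convex : (2^-1 * (2 * a) + 2^-1 * (2 * b)) `^ p
    <= 2^-1 * (2 * a) `^ p + 2^-1 * (2 * b) `^ p.
  rewrite {2 4}(_ : 2^-1 = 1 - 2^-1); last by rewrite {2}(splitr 1) div1r addrK.
  apply: (convex_powR p1 (Itv01 _ _)) => //=;
  rewrite ?inE/= ?in_itv/= ?mulr_ge0 // ?invr_ge0// invf_le1 ?ler1n //.
move: convex; rewrite !mulrA mulVf// !mul1r => /le_trans; apply.
rewrite !powRM// !mulrA -powR_inv1// -powRD ?pnatr_eq0 ?implybT//.
by rewrite (addrC _ p) -mulrDr.
Qed.

Lemma powR_shift_le_eventually (R : realType) (lam mu del p : R) :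
  0 <= lam < mu -> 0 <= del -> 0 < p ->
  exists2 r0 : R, 0 < r0 & forall D, r0 <= D -> lam * (D + del) `^ p <= mu * D `^ p.
Proof.
move=> /andP[lam0 lam_mu] del0 p0.
have [->|lam_neq0] := eqVneq lam 0.
  by exists 1 => // D _; rewrite mul0r mulr_ge0 ?powR_ge0 ?(le_trans lam0) ?ltW.
have lam_gt0 : 0 < lam by rewrite lt_neqAle eq_sym lam_neq0.
have ratio_gt1 : 1 < mu / lam by rewrite ltr_pdivlMr // mul1r.
(* (D + del) <= g D for D large, where g is the p-th root of mu / lam *)
set g := (mu / lam) `^ p^-1.
have gp : g `^ p = mu / lam.
  by rewrite -powRrM mulVf ?gt_eqF // powRr1 // ltW // (lt_trans ltr01).
have g_gt1 : 1 < g.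
  rewrite ltNge; apply/negP => g_le1.
  have := @ge0_ler_powR R p (ltW p0) g 1.
  rewrite !nnegrE powR_ge0 ler01 => /(_ isT isT g_le1).
  by rewrite gp powR1 leNgt ratio_gt1.
have g0 : 0 <= g by rewrite ltW // (lt_trans ltr01).
exists (del / (g - 1) + 1); first by rewrite ltr_pwDr // divr_ge0 // subr_ge0 ltW.
move=> D hD.
have D0 : 0 <= D by apply: le_trans hD; rewrite addr_ge0 // divr_ge0 // subr_ge0 ltW.
have shift_le : D + del <= g * D.
  have : del / (g - 1) <= D by lra.
  rewrite ler_pdivrMr ?subr_gt0 //; lra.
have := @ge0_ler_powR R p (ltW p0) (D + del) (g * D).
rewrite !nnegrE addr_ge0 ?mulr_ge0 // => /(_ isT isT shift_le).
rewrite powRM // gp => /(ler_wpM2l lam0).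
by rewrite mulrA mulrCA divff ?gt_eqF // mulr1.
Qed.

Section DistributionallyRobust.
Variables (R : realType) (m : nat) (nrm : 'rV[R]_m -> R) (gamma : R).
Hypotheses (nrm_norm : is_norm nrm) (gamma_gt0 : 0 < gamma).
Local Notation d := (dist nrm gamma).

Lemma nrm0 : nrm 0 = 0.
Proof. by case: nrm_norm => _ nrmZ _; rewrite -(scale0r 0) nrmZ normr0 mul0r. Qed.

Lemma nrmN x : nrm (- x) = nrm x.
Proof. by case: nrm_norm => _ nrmZ _; rewrite -scaleN1r nrmZ normrN normr1 mul1r. Qed.

Lemma nrm_ge0 x : 0 <= nrm x.
Proof. by case: nrm_norm => _ _ nrmD; have := nrmD x (- x); rewrite subrr nrmN nrm0; lra. Qed.

Lemma dist_ge0 x y : 0 <= d x y.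
Proof. by rewrite /dist addr_ge0 ?nrm_ge0 // mulr_ge0 // divr_ge0 // ltW. Qed.

Lemma distxx x : d x x = 0.
Proof. by rewrite /dist !subrr normr0 mulr0 addr0 nrm0. Qed.

Lemma dist_triangle x y z : d x z <= d x y + d y z.
Proof.
case: nrm_norm => _ _ nrmD; rewrite /dist.
have := nrmD (x.1 - y.1) (y.1 - z.1); rewrite subrKA.
have := ler_normD (x.2 - y.2) (y.2 - z.2); rewrite subrKA.
have g2 : 0 <= gamma / 2 by rewrite divr_ge0 // ltW.
move=> /(ler_wpM2l g2); rewrite mulrDr; lra.
Qed.

Variable p : R.
Hypothesis p_ge1 : 1 <= p.

Let p_gt0 : 0 < p. Proof. exact: lt_le_trans ltr01 p_ge1. Qed.

Lemma powR_dist_triangle x y z :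
  d x z `^ p <= 2 `^ (p - 1) * (d x y `^ p + d y z `^ p).
Proof.
apply: le_trans (powRD_le (dist_ge0 _ _) (dist_ge0 _ _) p_ge1).
apply: ge0_ler_powR; first exact: ltW.
- by rewrite nnegrE dist_ge0.
- by rewrite nnegrE addr_ge0 ?dist_ge0.
- exact: dist_triangle.
Qed.

Variables (Xi : set (Pt R m)) (dd : nat) (loss : 'rV[R]_dd -> Pt R m -> R).
Variables (theta : 'rV[R]_dd) (xi0 : Pt R m).
Hypothesis loss_ge0 : forall xi, 0 <= loss theta xi.
Local Notation h := (hfun nrm gamma p Xi loss theta).
Local Notation kap := (kappa nrm gamma p Xi loss xi0 theta).

Lemma hfun_ge_loss lam xi : Xi xi -> ((loss theta xi)%:E <= h lam xi)%E.
Proof.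
move=> xi_in; apply: ereal_sup_ubound; exists xi => //.
by rewrite distxx powR0 ?mulr0 ?subr0 // gt_eqF.
Qed.

Lemma hfun_ge0 lam xi : Xi xi -> (0 <= h lam xi)%E.
Proof. by move=> xi_in; apply: le_trans (hfun_ge_loss lam xi_in); rewrite lee_fin. Qed.

Lemma hfun_le_growth (C : R) xi : 0 < C ->
    (forall z, Xi z -> loss theta z <= C * (1 + d z xi0 `^ p)) -> Xi xi ->
  (h (C * 2 `^ (p - 1)) xi <= (C * (1 + 2 `^ (p - 1) * d xi xi0 `^ p))%:E)%E.
Proof.
move=> C_gt0 growth xi_in; apply: ge_ereal_sup => _ [z z_in <-]; rewrite lee_fin.
have := ler_wpM2l (ltW C_gt0) (powR_dist_triangle z xi xi0).
have := growth z z_in.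
set K := 2 `^ (p - 1); set a := d z xi `^ p; set b := d xi xi0 `^ p.
rewrite !mulrDr mulrA mulr1; lra.
Qed.

Lemma kappa_gt_witness (l r : R) : (l%:E < kap)%E -> 0 < r ->
  exists2 xi, Xi xi /\ r < d xi xi0 &
    l * d xi xi0 `^ p < loss theta xi - loss theta xi0.
Proof.
move=> l_kap r_gt0.
have /ereal_sup_gt[_ [xi [xi_in r_d] <-]] :=
  lt_le_trans l_kap (ereal_inf_lbound (ex_intro2 _ _ r r_gt0 erefl)).
rewrite lte_fin => l_lt; exists xi => //.
by rewrite -ltr_pdivlMr // powR_gt0 // (lt_trans r_gt0 r_d).
Qed.

Lemma hfun_below_kappa lam xi : kap \is a fin_num -> 0 <= lam -> (lam%:E < kap)%E ->
  Xi xi -> h lam xi = +oo%E.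
Proof.
move=> kap_fin lam0 lam_kap xi_in.
set k := fine kap; have kapE : kap = k%:E by rewrite /k fineK.
rewrite kapE lte_fin in lam_kap.
(* lam < l2 < l1 < kap: l2 absorbs moving the base point from xi0 to xi, and l1 - l2 > 0
   makes the gain grow linearly with the distance *)
set l1 := (lam + k) / 2; set l2 := (lam + l1) / 2.
have l1_kap : l1 < k by rewrite /l1; lra.
have l21 : 0 < l1 - l2 by rewrite /l2 /l1; lra.
have [r0 r0_gt0 shift_le] : exists2 r0 : R, 0 < r0 &
    forall D, r0 <= D -> lam * (D + d xi0 xi) `^ p <= l2 * D `^ p.
  by apply: powR_shift_le_eventually; rewrite ?dist_ge0 // lam0 /l2 /l1; lra.
apply: eq_infty => M.
set r := r0 + 1 + `|M| / (l1 - l2).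
have q_ge0 : 0 <= `|M| / (l1 - l2) by rewrite divr_ge0 ?normr_ge0 ?ltW.
have M_r : `|M| <= (l1 - l2) * r.
  have qE : (l1 - l2) * (`|M| / (l1 - l2)) = `|M| by rewrite mulrC divfK ?gt_eqF.
  have := mulr_gt0 l21 r0_gt0; rewrite /r !mulrDr qE; lra.
have r_ge1 : 1 <= r by rewrite /r; lra.
have r0_r : r0 <= r by rewrite /r; lra.
have [xi' [xi'_in r_D] gain] : exists2 xi', Xi xi' /\ r < d xi' xi0 &
    l1 * d xi' xi0 `^ p < loss theta xi' - loss theta xi0.
  by apply: kappa_gt_witness; rewrite ?kapE ?lte_fin // (lt_le_trans ltr01).
apply: le_trans (ereal_sup_ubound _); last by exists xi'.
rewrite lee_fin; set D := d xi' xi0 in r_D gain.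
have D_ge1 : 1 <= D by rewrite (le_trans r_ge1) ?ltW.
have far : lam * d xi' xi `^ p <= lam * (D + d xi0 xi) `^ p.
  apply/ler_wpM2l/ge0_ler_powR => //; first exact: ltW.
  - by rewrite nnegrE dist_ge0.
  - by rewrite nnegrE addr_ge0 ?dist_ge0.
  - exact: dist_triangle.
have := shift_le D (le_trans r0_r (ltW r_D)).
have := ler_wpM2l (ltW l21) (le1r_powR D_ge1 p_ge1).
have := ler_wpM2l (ltW l21) (ltW r_D).
have := loss_ge0 xi0; have := ler_norm M.
move: gain far M_r; set A := D `^ p; set B := (D + d xi0 xi) `^ p.
rewrite !mulrBl; lra.
Qed.

Variables (n : nat) (xs : 'I_n -> Pt R m).
Hypothesis xs_in : forall i, Xi (xs i).
Local Notation Ht v lam := (Htilde nrm gamma p Xi loss xs v theta lam).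

Lemma Htilde_ge0 v lam : (forall i, 0 <= v i) -> (0 <= Ht v lam)%E.
Proof.
move=> v_ge0; apply: sume_ge0 => i _.
by apply: mule_ge0; rewrite ?lee_fin ?hfun_ge0.
Qed.

Variables (sigma : R) (C : 'rV[R]_dd -> R).
Hypotheses (sigma_gt0 : 0 < sigma) (C_gt0 : 0 < C theta).
Hypothesis loss_growth : forall z, Xi z -> loss theta z <= C theta * (1 + d z xi0 `^ p).
Hypothesis kappa_fin : kap \is a fin_num.
Local Notation dual v lam := ((lam * sigma `^ p)%:E + Ht v lam)%E.
Local Notation tau_theta := (tau nrm gamma p sigma xs C xi0 theta).

Section MassVector.
Variable v : 'I_n -> R.
Hypotheses (v_ge0 : forall i, 0 <= v i) (v_sum1 : \sum_(i < n) v i = 1).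

Lemma Htilde_pinfty lam : (forall i, h lam (xs i) = +oo%E) -> Ht v lam = +oo%E.
Proof.
move=> h_oo.
have [i v_gt0] : exists i, 0 < v i.
  apply/not_existsP => v_le0; move/eqP: v_sum1; rewrite big1 ?(eq_sym 0) ?oner_eq0 //.
  by move=> i _; apply/eqP; rewrite eq_le v_ge0 andbT leNgt; apply/negP/v_le0.
rewrite /Htilde (bigD1 i) //= h_oo gt0_muley ?lte_fin // addye // -ltNye.
apply: lt_le_trans ltNy0 _; apply: sume_ge0 => j _.
by apply: mule_ge0; rewrite ?lee_fin ?hfun_ge0.
Qed.

Lemma Htilde_le lam (b : 'I_n -> R) (B : R) :
    (forall i, (h lam (xs i) <= (b i)%:E)%E) -> (forall i, b i <= B) ->
  (Ht v lam <= B%:E)%E.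
Proof.
move=> h_le b_le; apply: (@le_trans _ _ (\sum_(i < n) (v i * B)%:E)%E).
  apply: lee_sum => i _; rewrite EFinM; apply: lee_wpmul2l; first by rewrite lee_fin.
  by apply: le_trans (h_le i) _; rewrite lee_fin.
by rewrite sumEFin lee_fin -mulr_suml v_sum1 mul1r.
Qed.

Lemma dual_le_at_growth_rate :
  (dual v (C theta * 2 `^ (p - 1)) <= (tau_theta * sigma `^ p)%:E)%E.
Proof.
set K := 2 `^ (p - 1); set rh := rho nrm gamma xs xi0.
have sp_gt0 : 0 < sigma `^ p by apply: powR_gt0.
have -> : tau_theta * sigma `^ p = C theta * K * sigma `^ p + C theta * (1 + K * rh `^ p).
  by rewrite /tau -/K -/rh mulrDr mulrDl; congr (_ + _); rewrite -mulrA divfK ?gt_eqF.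
rewrite EFinD leeD // (Htilde_le (b := fun i => C theta * (1 + K * d (xs i) xi0 `^ p))) //.
  by move=> i; apply: hfun_le_growth.
move=> i; apply: ler_wpM2l; first exact: ltW.
rewrite lerD2l; apply: ler_wpM2l; first exact: powR_ge0.
have d_rh : d (xs i) xi0 <= rh by apply: le_bigmax.
apply: ge0_ler_powR => //; first exact: ltW.
- by rewrite nnegrE dist_ge0.
- by rewrite nnegrE (le_trans (dist_ge0 (xs i) xi0)).
Qed.

Lemma exists_dual_le_in_kappa_tau lam : 0 <= lam ->
  exists lst, [/\ 0 <= lst, (kap <= lst%:E)%E, lst <= tau_theta & (dual v lst <= dual v lam)%E].
Proof.
move=> lam0; set l0 := C theta * 2 `^ (p - 1).
have l0_ge0 : 0 <= l0 by rewrite mulr_ge0 ?powR_ge0 ?ltW.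
have dual_l0 := dual_le_at_growth_rate.
have kap_l0 : (kap <= l0%:E)%E.
  rewrite leNgt; apply/negP => l0_kap; move: dual_l0.
  by rewrite Htilde_pinfty ?addey // => i; apply: hfun_below_kappa.
have l0_tau : l0 <= tau_theta.
  rewrite /tau mulrDr lerDl; apply: mulr_ge0; first exact: ltW.
  by rewrite divr_ge0 ?powR_ge0 // addr_ge0 ?mulr_ge0 ?powR_ge0.
have [lam_kap|kap_lam] := ltP lam%:E kap.
  exists l0; split => //.
  by rewrite [Ht v lam]Htilde_pinfty ?addey ?leey // => i; apply: hfun_below_kappa.
have [lam_tau|tau_lam] := leP lam tau_theta; first by exists lam.
exists l0; split => //; apply: le_trans dual_l0 _.
rewrite -[X in (X <= _)%E]adde0 leeD ?Htilde_ge0 // lee_fin ler_wpM2r ?powR_ge0 ?ltW //.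
Qed.

End MassVector.

Lemma dual_inf_le_scaled (u v : 'I_n -> R) (c e : R) :
    (forall i, 0 <= u i) -> (forall i, 0 <= v i) -> \sum_(i < n) v i = 1 ->
    0 < c -> c <= e ->
    (forall lam, (kap <= lam%:E)%E -> lam <= tau_theta ->
       (c%:E * Ht u lam <= e%:E * Ht v lam)%E) ->
  (c%:E * ereal_inf [set dual u lam | lam in [set lam : R | (0 <= lam)%R]]
     <= e%:E * ereal_inf [set dual v lam | lam in [set lam : R | (0 <= lam)%R]])%E.
Proof.
move=> u_ge0 v_ge0 v_sum1 c_gt0 c_e Ht_le.
have e_gt0 := lt_le_trans c_gt0 c_e.
apply: (le_scaled_ereal_inf (ltW c_gt0) e_gt0) => lam lam0.
have [lst [lst0 kap_lst lst_tau dual_lst]] := exists_dual_le_in_kappa_tau v_ge0 v_sum1 lam0.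
exists lst => //; have e_ge0 : (0 <= e%:E)%E by rewrite lee_fin (ltW e_gt0).
apply: le_trans (lee_wpmul2l e_ge0 dual_lst).
rewrite !ge0_muleDr ?Htilde_ge0 ?lee_fin ?mulr_ge0 ?powR_ge0 //.
by rewrite leeD ?Ht_le // -!EFinM lee_fin ler_wpM2r ?mulr_ge0 ?powR_ge0.
Qed.

End DistributionallyRobust.

Theorem corollary1 (R : realType) (m : nat) (nrm : 'rV[R]_m -> R) (gamma : R)
    (X : set 'rV[R]_m) (Y : set R) (p sigma : R) (n : nat) (xs : 'I_n -> Pt R m)
    (dd : nat) (loss : 'rV[R]_dd -> Pt R m -> R) (Theta : set 'rV[R]_dd)
    (C : 'rV[R]_dd -> R) (xi0 : Pt R m)
    (eps alpha : R) (w : 'I_n -> R) (theta0 : 'rV[R]_dd) :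
  is_norm nrm -> 0 < gamma ->
  complete_on nrm gamma (X `*` Y) ->
  1 <= p -> 0 < sigma -> (0 < n)%N ->
  (forall i, (X `*` Y) (xs i)) ->
  (forall theta xi, 0 <= loss theta xi) ->
  (forall theta, Theta theta -> forall xi, (X `*` Y) xi ->
     forall e : R, 0 < e -> exists2 del : R, 0 < del & forall zeta, (X `*` Y) zeta ->
       dist nrm gamma zeta xi < del -> `|loss theta zeta - loss theta xi| < e) ->
  (forall theta, 0 < C theta) -> continuous C ->
  (X `*` Y) xi0 ->
  (forall theta, Theta theta -> forall xi, (X `*` Y) xi ->
     loss theta xi <= C theta * (1 + (dist nrm gamma xi xi0) `^ p)) ->
  (forall theta, Theta theta -> forall i,
     kappa nrm gamma p (X `*` Y) loss xi0 theta \is a fin_num /\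
     (hfun nrm gamma p (X `*` Y) loss theta
        (fine (kappa nrm gamma p (X `*` Y) loss xi0 theta)) (xs i) < +oo)%E) ->
  (* standing fact: strong duality for P_n and for P~_n *)
  (forall theta, Theta theta ->
     wc_risk nrm gamma p (X `*` Y) sigma loss (empirical nrm gamma xs) theta =
     ereal_inf [set ((lam * sigma `^ p)%:E + Hfun nrm gamma p (X `*` Y) loss xs theta lam)%E
               | lam in [set lam : R | 0 <= lam]]) ->
  (forall theta, Theta theta ->
     wc_risk nrm gamma p (X `*` Y) sigma loss (wmeasure nrm gamma xs w) theta =
     ereal_inf [set ((lam * sigma `^ p)%:E + Htilde nrm gamma p (X `*` Y) loss xs w theta lam)%E
               | lam in [set lam : R | 0 <= lam]]) ->
  0 < eps < 1 -> 1 <= alpha ->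
  (forall i, 0 <= w i) -> \sum_(i < n) w i = 1 ->
  (forall theta, Theta theta -> forall lam : R,
     (kappa nrm gamma p (X `*` Y) loss xi0 theta <= lam%:E)%E ->
     lam <= tau nrm gamma p sigma xs C xi0 theta ->
     ((1 - eps)%:E * Hfun nrm gamma p (X `*` Y) loss xs theta lam
        <= Htilde nrm gamma p (X `*` Y) loss xs w theta lam)%E /\
     (Htilde nrm gamma p (X `*` Y) loss xs w theta lam
        <= (1 + eps)%:E * Hfun nrm gamma p (X `*` Y) loss xs theta lam)%E) ->
  Theta theta0 ->
  (wc_risk nrm gamma p (X `*` Y) sigma loss (wmeasure nrm gamma xs w) theta0
     <= alpha%:E * ereal_inf (wc_risk nrm gamma p (X `*` Y) sigma loss (wmeasure nrm gamma xs w) @` Theta))%E ->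
  (wc_risk nrm gamma p (X `*` Y) sigma loss (empirical nrm gamma xs) theta0
     <= (alpha * ((1 + eps) / (1 - eps)))%:E
        * ereal_inf (wc_risk nrm gamma p (X `*` Y) sigma loss (empirical nrm gamma xs) @` Theta))%E.
Proof.
(* Completeness, continuity, and h_i(theta, kappa(theta)) < +oo only serve the strong
   duality, which is assumed here. *)
move=> nrm_norm gamma_gt0 _ p_ge1 sigma_gt0 n_gt0 xs_in loss_ge0 _ C_gt0 _ _ growth
  kappa_h dualP dualW /andP[eps_gt0 eps_lt1] alpha_ge1 w_ge0 w_sum1 H_cmp th0_in th0_opt.
pose riskP := wc_risk nrm gamma p (X `*` Y) sigma loss (empirical nrm gamma xs).
pose riskW := wc_risk nrm gamma p (X `*` Y) sigma loss (wmeasure nrm gamma xs w).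
(* [Hfun] is [Htilde] at these weights, by conversion. *)
pose unif (i : 'I_n) : R := n%:R^-1.
have unif_ge0 i : 0 <= unif i by rewrite invr_ge0 ler0n.
have unif_sum1 : \sum_(i < n) unif i = 1.
  by rewrite sumr_const card_ord -[_ *+ n]mulr_natr mulVf // pnatr_eq0 -lt0n.
have kappa_fin th : Theta th -> kappa nrm gamma p (X `*` Y) loss xi0 th \is a fin_num.
  by move=> /kappa_h /(_ (Ordinal n_gt0)) [].
have dual_le th (th_in : Theta th) := dual_inf_le_scaled nrm_norm gamma_gt0 p_ge1
  (loss_ge0 th) xs_in sigma_gt0 (C_gt0 th) (growth th th_in) (kappa_fin th th_in).
have riskW_le th : Theta th -> (riskW th <= (1 + eps)%:E * riskP th)%E.
  move=> th_in; rewrite /riskW /riskP dualP // dualW // -[leLHS]mul1e.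
  apply: (dual_le th th_in w unif) => //; first lra.
  by move=> lam kap_lam lam_tau; rewrite mul1e; case: (H_cmp th th_in lam kap_lam lam_tau).
have riskP_le th : Theta th -> ((1 - eps)%:E * riskP th <= riskW th)%E.
  move=> th_in; rewrite /riskW /riskP dualP // dualW // -[leRHS]mul1e.
  apply: (dual_le th th_in unif w) => //; try lra.
  by move=> lam kap_lam lam_tau; rewrite mul1e; case: (H_cmp th th_in lam kap_lam lam_tau).
have infW_le : (ereal_inf (riskW @` Theta) <= (1 + eps)%:E * ereal_inf (riskP @` Theta))%E.
  rewrite -[leLHS]mul1e; apply: le_scaled_ereal_inf => [||th th_in]; try lra.
  by exists th; rewrite ?mul1e ?riskW_le.
have -> : alpha * ((1 + eps) / (1 - eps)) = (1 - eps)^-1 * (alpha * (1 + eps)).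
  by rewrite mulrA mulrC.
rewrite EFinM -muleA lee_pdivlMl; last lra.
apply: le_trans (riskP_le _ th0_in) _; apply: le_trans th0_opt _.
by rewrite EFinM -muleA lee_wpmul2l // lee_fin; lra.
Qed.
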